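(* Let $K\subset M$ be fields, let $\bar M$ be a separable closure of $M$, and let $K^a$ (resp. $\bar K$) be the separable closure of $K$ in $M$ (resp. in $\bar M$), i.e. the set of elements of $M$ (resp. $\bar M$) that are separable algebraic over $K$. Suppose that for every finite separable extension $L_1/M$ with $L_1\subset \bar M$ there exists a finite separable extension $L/K$ with $L\subset M$ such that, denoting by $\tilde L\subset\bar M$ the Galois closure of $L/K$, the compositum $\tilde L M$ contains $L_1$. Then the Galois closure of $K^a/K$ (inside $\bar M$) is $\bar K$.
   Context: The Galois closure of a separable algebraic extension $E/K$ inside $\bar M$ is the smallest subfield of $\bar M$ containing $E$ that is Galois over $K$. *)

From HB Require Import structures.
From mathcomp Require Import all_boot all_order all_algebra all_field.
Set Implicit Arguments. Unset Strict Implicit. Unset Printing Implicit Defensive.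
Import GRing.Theory.
Local Open Scope ring_scope.

(* Everything lives inside one ambient field F, playing the role of Mbar.
   Subfields / subsets of F are Prop-valued predicates F -> Prop. *)
Section Defs.
Variable F : fieldType.

Definition subfield (S : F -> Prop) : Prop :=
  [/\ S 0, S 1, (forall x y, S x -> S y -> S (x - y)),
      (forall x y, S x -> S y -> S (x * y)) & (forall x, S x -> S x^-1)].

Definition subsetF (A B : F -> Prop) : Prop := forall x, A x -> B x.

Definition poly_over (S : F -> Prop) (p : {poly F}) : Prop := forall i, S p`_i.

Definition sep_alg_over (S : F -> Prop) (x : F) : Prop :=
  exists p : {poly F}, [/\ poly_over S p, p != 0, separable_poly p & root p x].

Definition separably_closed : Prop :=
  forall p : {poly F}, separable_poly p -> (1 < size p)%N -> exists x, root p x.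

Definition finite_over (K L : F -> Prop) : Prop :=
  exists s : seq F, forall x, L x ->
    exists c : nat -> F, (forall i, K (c i)) /\ x = \sum_(i < size s) c i * s`_i.

Definition splits_in (E : F -> Prop) (p : {poly F}) : Prop :=
  exists rs : seq F, (forall r, r \in rs -> E r) /\
    p = lead_coef p *: \prod_(r <- rs) ('X - r%:P).

Definition galois_over (K E : F -> Prop) : Prop :=
  [/\ subfield E, subsetF K E &
     forall x, E x -> exists p : {poly F},
       [/\ poly_over K p, p != 0, separable_poly p, root p x & splits_in E p]].

Definition galois_closure (K L G : F -> Prop) : Prop :=
  [/\ galois_over K G, subsetF L G &
     forall G', galois_over K G' -> subsetF L G' -> subsetF G G'].

Definition compositum (A B : F -> Prop) (x : F) : Prop :=
  forall S, subfield S -> subsetF A S -> subsetF B S -> S x.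

Definition rel_sep_closure (K E : F -> Prop) (x : F) : Prop :=
  E x /\ sep_alg_over K x.

End Defs.

From HB Require Import structures.
From mathcomp Require Import all_boot all_order all_algebra all_field.
From mathcomp Require Import boolp.
Set Implicit Arguments. Unset Strict Implicit. Unset Printing Implicit Defensive.
Import GRing.Theory.
Local Open Scope ring_scope.

(* The separable closure K^s of K in F is Galois over K because F is
   separably closed, and it contains K^a.  Conversely, let G ⊇ K^a be Galois
   over K and x ∈ K^s.  Applied to L1 = M(x), the hypothesis puts x in the
   compositum of M with a Galois closure of some L ⊆ K^a, which lies in G;
   that compositum lies in the union of the towers M(t_1)...(t_n) with
   t_i ∈ G.  Going up a tower keeps the separable part inside G: if
   z = h(t) ∈ B(t) with deg h < deg g, g the minimal polynomial of t over B,
   then g splits over G with simple roots s, every h(s) is a conjugate of z,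
   and interpolation at the roots of g puts the coefficients of h in
   B ∩ K^s ⊆ G. *)

Section SubfieldType.
Variables (F : fieldType) (B : F -> Prop) (hB : subfield B).

(* The dummy use of [hB] makes the predicate depend on it, so that it can
   carry a canonical [divring_closed] structure. *)
Definition subfield_mem : {pred F} := fun x => let _ := hB in `[< B x >].

Lemma subfield_memP x : reflect (B x) (x \in subfield_mem).
Proof. exact: asboolP. Qed.

Lemma subfield_mem_closed : GRing.divring_closed subfield_mem.
Proof.
have [_ B1 BB BM BV] := hB.
split; first exact/subfield_memP.
- by move=> x y /subfield_memP Bx /subfield_memP By; apply/subfield_memP/BB.
- by move=> x y /subfield_memP Bx /subfield_memP By; apply/subfield_memP/BM/BV.
Qed.

HB.instance Definition _ :=
  GRing.isDivringClosed.Build F subfield_mem subfield_mem_closed.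

Inductive subfield_of := SubfieldOf x & x \in subfield_mem.
Definition subfield_val u := let: SubfieldOf x _ := u in x.

HB.instance Definition _ := [isSub for subfield_val].
HB.instance Definition _ := [Choice of subfield_of by <:].
HB.instance Definition _ := [SubChoice_isSubComUnitRing of subfield_of by <:].
HB.instance Definition _ := [SubComUnitRing_isSubIntegralDomain of subfield_of by <:].
HB.instance Definition _ := [SubIntegralDomain_isSubField of subfield_of by <:].

Definition subfield_inj : {rmorphism subfield_of -> F} := val.

Lemma subfield_valP (a : subfield_of) : B (val a).
Proof. by case: a => x; apply/subfield_memP. Qed.

Lemma poly_overP p : reflect (poly_over B p) (p \is a polyOver subfield_mem).
Proof. by apply: (iffP polyOverP) => Bp i; apply/subfield_memP. Qed.

Lemma poly_over_inj (q : {poly subfield_of}) : poly_over B (map_poly subfield_inj q).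
Proof. by move=> i; rewrite coef_map; apply: subfield_valP. Qed.

Lemma poly_over_lift p :
  poly_over B p -> exists q : {poly subfield_of}, p = map_poly subfield_inj q.
Proof.
move=> Bp; exists (\poly_(i < size p) insubd 0 p`_i); apply/polyP => i.
rewrite coef_map /= coef_poly; case: ltnP => [_|/(nth_default 0) -> //].
by rewrite insubdK //; apply/subfield_memP.
Qed.

End SubfieldType.

Lemma subfield_ext (F : fieldType) (A C : F -> Prop) :
  subfield A -> (forall z, A z <-> C z) -> subfield C.
Proof.
move=> [A0 A1 AB AM AV] AC; split.
- exact/AC.
- exact/AC.
- by move=> x y /AC Ax /AC Ay; apply/AC/AB.
- by move=> x y /AC Ax /AC Ay; apply/AC/AM.
- by move=> x /AC Ax; apply/AC/AV.
Qed.

Lemma subfield_image (E F : fieldType) (f : {rmorphism E -> F}) :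
  subfield (fun z => exists e, z = f e).
Proof.
split.
- by exists 0; rewrite rmorph0.
- by exists 1; rewrite rmorph1.
- by move=> _ _ [a ->] [b ->]; exists (a - b); rewrite rmorphB.
- by move=> _ _ [a ->] [b ->]; exists (a * b); rewrite rmorphM.
- by move=> _ [a ->]; exists a^-1; rewrite fmorphV.
Qed.

Lemma exists_min_root_poly (F0 L : fieldType) (iota : {rmorphism F0 -> L}) z
    (p : {poly F0}) :
  p != 0 -> root (map_poly iota p) z ->
  exists q : {poly F0}, [/\ q != 0, root (map_poly iota q) z &
     forall r, root (map_poly iota r) z -> r != 0 -> (size q <= size r)%N].
Proof.
move=> nz_p pz.
pose P n :=
  `[< exists q : {poly F0}, [/\ q != 0, root (map_poly iota q) z & size q = n] >].
have [|n /asboolP[q [nz_q qz <-]] q_min] := ex_minnP (P := P).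
  by exists (size p); apply/asboolP; exists p.
by exists q; split=> // r rz nz_r; apply/q_min/asboolP; exists r.
Qed.

Lemma simple_extension_exists (F0 L : fieldType) (iota : {rmorphism F0 -> L}) z
    (p : {poly F0}) :
  p != 0 -> root (map_poly iota p) z ->
  exists (E : fieldExtType F0) (f : {rmorphism E -> L}),
    (forall a, f a%:A = iota a) /\ exists z' : E, f z' = z.
Proof.
move=> nz_p pz; have [q [nz_q qz q_min]] := exists_min_root_poly nz_p pz.
have irr_q : irreducible_poly q := (subfx_irreducibleP qz nz_q).1 q_min.
exists (SubFieldExtType qz irr_q), (subfx_inj (iota := iota) (z := z) (p := q)).
split; first exact: subfx_inj_base.
by exists (subfx_root iota z q); apply: subfx_inj_root.
Qed.

Definition alg_over (F : fieldType) (B : F -> Prop) (t : F) : Prop :=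
  exists p, [/\ poly_over B p, p != 0 & root p t].

Definition adjoin (F : fieldType) (B : F -> Prop) (t : F) (z : F) : Prop :=
  exists q, poly_over B q /\ z = q.[t].

Lemma adjoin_sub (F : fieldType) (B : F -> Prop) t : B 0 -> subsetF B (adjoin B t).
Proof.
move=> B0 z Bz; exists z%:P; split; last by rewrite hornerC.
by move=> i; rewrite coefC; case: eqP.
Qed.

Lemma adjoin_mono (F : fieldType) (B B' : F -> Prop) t :
  subsetF B B' -> subsetF (adjoin B t) (adjoin B' t).
Proof. by move=> BB' z [q [Bq ->]]; exists q; split=> // i; apply: BB'. Qed.

Section Adjoin.
Variables (F : fieldType) (B : F -> Prop) (hB : subfield B) (t : F).

Lemma adjoin_gen : adjoin B t t.
Proof.
have [B0 B1 _ _ _] := hB.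
by exists 'X; split=> [i|]; rewrite ?hornerX // coefX; case: eqP.
Qed.

Hypothesis t_alg : alg_over B t.
Local Notation iota := (subfield_inj hB).

Lemma exists_min_root_poly_over : exists2 q : {poly subfield_of hB},
    q != 0 /\ root (map_poly iota q) t &
  forall r, root (map_poly iota r) t -> r != 0 -> (size q <= size r)%N.
Proof.
have [p [Bp nz_p pt]] := t_alg; have [p' def_p] := poly_over_lift hB Bp.
have nz_p' : p' != 0 by rewrite -(map_poly_eq0 iota) -def_p.
have p't : root (map_poly iota p') t by rewrite -def_p.
by have [q [nz_q qt q_min]] := exists_min_root_poly nz_p' p't; exists q.
Qed.

Lemma adjoin_subfield : subfield (adjoin B t).
Proof.
have [q [nz_q qt] _] := exists_min_root_poly_over.
have inj_eval r := @subfx_inj_eval _ _ iota t q qt nz_q r.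
apply: (subfield_ext (subfield_image (subfx_inj (iota := iota) (z := t) (p := q)))).
move=> z; split=> [[e ->]|[h [Bh ->]]].
- have [r ->] := subfxE e; exists (map_poly iota r).
  by split; [apply: poly_over_inj | apply: inj_eval].
- have [r ->] := poly_over_lift hB Bh; exists (subfx_eval iota t q r).
  by rewrite -inj_eval.
Qed.

Lemma adjoin_minpoly : exists g : {poly F}, [/\ poly_over B g, g != 0, root g t,
    forall r, poly_over B r -> root r t -> g %| r &
    forall z, adjoin B t z ->
      exists h, [/\ poly_over B h, (size h < size g)%N & z = h.[t]]].
Proof.
have [q [nz_q qt] q_min] := exists_min_root_poly_over.
have modpE r : (r %% map_poly iota q).[t] = r.[t].
  by rewrite [in RHS](divp_eq r (map_poly iota q)) hornerD hornerM (eqP qt) mulr0 add0r.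
exists (map_poly iota q); split=> //.
- exact: poly_over_inj.
- by rewrite map_poly_eq0.
- move=> _ /(poly_over_lift hB)[r ->] rt; rewrite dvdp_map.
  apply/modp_eq0P/eqP/negPn/negP => nz_rq.
  have := q_min (r %% q); rewrite map_modp /root modpE (eqP rt) eqxx.
  by move/(_ isT nz_rq); rewrite leqNgt ltn_modp nz_q.
- move=> z [_ [/(poly_over_lift hB)[h ->] ->]]; exists (map_poly iota (h %% q)).
  split; first exact: poly_over_inj.
  - by rewrite !size_map_poly ltn_modp.
  - by rewrite map_modp modpE.
Qed.

Lemma finite_over_adjoin : finite_over B (adjoin B t).
Proof.
have [g [_ _ _ _ reduce]] := adjoin_minpoly.
exists (mkseq (fun i => t ^+ i) (size g)) => z /reduce[h [Bh small_h ->]].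
exists (fun i => h`_i); split=> //.
rewrite size_mkseq (horner_coef_wide _ (ltnW small_h)).
by apply: eq_bigr => i _; rewrite nth_mkseq.
Qed.

End Adjoin.

Lemma poly_over_interpolation (F : fieldType) (W : F -> Prop) (hW : subfield W)
    (rs : seq F) (h : {poly F}) :
  uniq rs -> (forall r, r \in rs -> W r) -> (size h <= size rs)%N ->
  (forall r, r \in rs -> W h.[r]) -> poly_over W h.
Proof.
have [W0 _ WB WM WV] := hW.
elim: rs h => [|r rs IHrs] h /=.
  by move=> _ _; rewrite leqn0 size_poly_eq0 => /eqP-> _ i; rewrite coef0.
case/andP=> r_rs uniq_rs Wrs size_h Wh.
have Wr : W r by apply: Wrs; rewrite mem_head.
have Wc : W h.[r] by apply: Wh; rewrite mem_head.
set c := h.[r] in Wc *; set h1 := h %/ ('X - r%:P).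
have def_h : h = h1 * ('X - r%:P) + c%:P.
  by rewrite {1}(divp_eq h ('X - r%:P)) modp_XsubC.
have W_h1 : poly_over W h1.
  apply: IHrs => // [s rs_s||s rs_s]; first by apply: Wrs; rewrite inE rs_s orbT.
  - by rewrite size_divp ?polyXsubC_eq0 // size_XsubC leq_subLR add1n.
  - have Ws : W s by apply: Wrs; rewrite inE rs_s orbT.
    have Whs : W h.[s] by apply: Wh; rewrite inE rs_s orbT.
    have nz_sr : s - r != 0 by rewrite subr_eq0; apply: contraNneq r_rs => <-.
    have -> : h1.[s] = (h.[s] - c) / (s - r).
      by rewrite [in RHS]def_h hornerD hornerM hornerXsubC hornerC addrK mulfK.
    by apply: WM; [apply: WB | apply/WV/WB].
apply/(poly_overP hW); rewrite def_h rpredD ?rpredM ?polyOverXsubC ?polyOverC //.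
- exact/poly_overP.
- exact/subfield_memP.
- exact/subfield_memP.
Qed.

Lemma separably_closed_split (F : fieldType) (p : {poly F}) :
  separably_closed F -> separable_poly p ->
  exists rs : seq F, p = lead_coef p *: \prod_(r <- rs) ('X - r%:P).
Proof.
move=> sepF; elim: {p}(size p) {-2}p (leqnn (size p)) => [|n IHn] p size_p sep_p.
  move: size_p; rewrite leqn0 size_poly_eq0 => /eqP->.
  by exists [::]; rewrite lead_coef0 scale0r.
have [size_p_le1|size_p_gt1] := leqP (size p) 1.
  have [c ->] : exists c, p = c%:P by exists p`_0; apply: size1_polyC.
  by exists [::]; rewrite big_nil alg_polyC lead_coefC.
have [x px] := sepF p sep_p size_p_gt1.
set q := p %/ ('X - x%:P).
have def_p : p = q * ('X - x%:P) by rewrite divpK // dvdp_XsubCl.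
have sep_q : separable_poly q by apply: dvdp_separable sep_p; rewrite def_p dvdp_mulr.
have size_q : (size q <= n)%N.
  have nz_q : q != 0.
    by apply: contraTneq size_p_gt1 => q0; rewrite def_p q0 mul0r size_poly0.
  by move: size_p; rewrite def_p size_mul ?polyXsubC_eq0 // size_XsubC addn2.
have [rs def_q] := IHn q size_q sep_q.
exists (x :: rs); rewrite big_cons def_p lead_coefM lead_coefXsubC mulr1.
by rewrite {1}def_q -scalerAl mulrC.
Qed.

Lemma sep_alg_over_alg (F : fieldType) (B : F -> Prop) t :
  sep_alg_over B t -> alg_over B t.
Proof. by case=> p [Bp nz_p _ pt]; exists p. Qed.

Lemma sep_alg_over_base (F : fieldType) (K : F -> Prop) (hK : subfield K) k :
  K k -> sep_alg_over K k.
Proof.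
move=> Kk; exists ('X - k%:P); split.
- by apply/(poly_overP hK); rewrite polyOverXsubC; apply/subfield_memP.
- by rewrite polyXsubC_eq0.
- by rewrite unlock !derivCE coprimep1.
- by rewrite root_XsubC.
Qed.

Section SeparableAlgebraic.
Variables (F : fieldType) (K : F -> Prop) (hK : subfield K).
Local Notation iota := (subfield_inj hK).

Lemma sep_alg_over_lift x : sep_alg_over K x ->
  exists2 p : {poly subfield_of hK},
    p != 0 /\ separable_poly p & root (map_poly iota p) x.
Proof.
case=> _ [/(poly_over_lift hK)[p ->] nz_p sep_p px]; exists p => //.
by rewrite -(map_poly_eq0 iota) -(separable_map iota).
Qed.

Lemma sep_alg_pair_extension x y : sep_alg_over K x -> sep_alg_over K y ->
  exists (L : fieldExtType (subfield_of hK)) (f : {rmorphism L -> F}) (x' y' : L),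
    [/\ forall k, f k%:A = iota k, f x' = x & f y' = y].
Proof.
move=> /sep_alg_over_lift[px [nz_px _] px_x] /sep_alg_over_lift[py [nz_py _] py_y].
have [E1 [f1 [f1_base [x' f1_x']]]] := simple_extension_exists nz_px px_x.
pose py1 := map_poly (in_alg E1) py.
have py1_y : root (map_poly f1 py1) y.
  by rewrite -map_poly_comp (eq_map_poly f1_base).
have nz_py1 : py1 != 0 by rewrite map_poly_eq0.
have [E2 [f2 [f2_base [y' f2_y']]]] := simple_extension_exists nz_py1 py1_y.
exists (baseFieldType E2), f2, (x'%:A : E2), y'; split=> //.
- by move=> k; rewrite -f1_base -f2_base.
- by rewrite f2_base.
Qed.

Section Transfer.
Variables (L : fieldExtType (subfield_of hK)) (f : {rmorphism L -> F}).
Hypothesis f_base : forall k, f k%:A = iota k.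

Lemma map_poly_in_alg (p : {poly subfield_of hK}) :
  map_poly f (map_poly (in_alg L) p) = map_poly iota p.
Proof. by rewrite -map_poly_comp; apply: eq_map_poly => k /=; rewrite f_base. Qed.

Lemma sep_alg_over_morph z : sep_alg_over K (f z) <-> separable_element 1 z.
Proof.
split=> [/sep_alg_over_lift[p [nz_p sep_p] pz] | sep_z].
  apply/separable_elementP; exists (map_poly (in_alg L) p); split.
  - by apply/polyOver1P; exists p.
  - by apply/eqP/(fmorph_inj f); rewrite rmorph0 -horner_map map_poly_in_alg; apply/eqP.
  - by rewrite separable_map.
have /polyOver1P[p def_p] := minPolyOver 1 z.
exists (map_poly iota p); split.
- exact: poly_over_inj.
- rewrite map_poly_eq0; apply: contraTneq (monic_minPoly 1 z) => p0.
  by rewrite def_p p0 map_poly0 monicE lead_coef0 eq_sym oner_eq0.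
- by rewrite separable_map -(separable_map (in_alg L)) -def_p.
- by rewrite -map_poly_in_alg -def_p rmorph_root ?root_minPoly.
Qed.

End Transfer.

Lemma sep_alg_over_ops x y : sep_alg_over K x -> sep_alg_over K y ->
  [/\ sep_alg_over K (x - y), sep_alg_over K (x * y) & sep_alg_over K x^-1].
Proof.
move=> Sx Sy.
have [L [f [x' [y' [f_base def_x def_y]]]]] := sep_alg_pair_extension Sx Sy.
move: Sx Sy; rewrite -{}def_x -{}def_y !(sep_alg_over_morph f_base) => sep_x sep_y.
set E := <<1 & [:: x'; y']>>%AS.
have sepE : separable 1 E by apply: separable_Fadjoin_seq; rewrite /= sep_x sep_y.
have E_x : x' \in E by apply: seqv_sub_adjoin; rewrite mem_head.
have E_y : y' \in E by apply: seqv_sub_adjoin; rewrite !inE eqxx orbT.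
have sepf z : z \in E -> sep_alg_over K (f z).
  by move=> Ez; apply/(sep_alg_over_morph f_base)/(separableP sepE).
by split; rewrite -?rmorphB -?rmorphM -?fmorphV; apply: sepf;
  rewrite ?rpredB ?rpredM ?memvV.
Qed.

Lemma sep_alg_over_subfield : subfield (sep_alg_over K).
Proof.
have [K0 K1 _ _ _] := hK.
split; [exact: sep_alg_over_base | exact: sep_alg_over_base | | |].
- by move=> x y Sx Sy; case: (sep_alg_over_ops Sx Sy).
- by move=> x y Sx Sy; case: (sep_alg_over_ops Sx Sy).
- by move=> x Sx; case: (sep_alg_over_ops Sx Sx).
Qed.

End SeparableAlgebraic.

Definition sep_part_sub (F : fieldType) (K B G : F -> Prop) : Prop :=
  forall z, B z -> sep_alg_over K z -> G z.

Fixpoint tower (F : fieldType) (B : F -> Prop) (T : seq F) : F -> Prop :=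
  if T is t :: T' then adjoin (tower B T') t else B.

Lemma tower_mono (F : fieldType) (B B' : F -> Prop) T :
  subsetF B B' -> subsetF (tower B T) (tower B' T).
Proof. by move=> BB'; elim: T => //= t T; apply: adjoin_mono. Qed.

Lemma tower_cat (F : fieldType) (B : F -> Prop) T1 T2 :
  tower B (T1 ++ T2) = tower (tower B T2) T1.
Proof. by elim: T1 => //= t T1 ->. Qed.

Lemma tower_sub (F : fieldType) (B : F -> Prop) T : B 0 -> subsetF B (tower B T).
Proof. by move=> B0; elim: T => //= t T IHT z /IHT; apply/adjoin_sub/IHT. Qed.

Section GaloisTower.
Variables (F : fieldType) (K G : F -> Prop) (hK : subfield K) (hG : galois_over K G).

Lemma galois_over_sep t : G t -> sep_alg_over K t.
Proof. by case: hG => _ _ /[apply] -[p [Kp nz_p sep_p pt _]]; exists p. Qed.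

Lemma galois_over_alg (B : F -> Prop) t : subsetF K B -> G t -> alg_over B t.
Proof.
move=> KB /galois_over_sep/sep_alg_over_alg[p [Kp nz_p pt]].
by exists p; split=> // i; apply: KB.
Qed.

Lemma sep_part_sub_adjoin (B : F -> Prop) t : subfield B -> subsetF K B -> G t ->
  sep_part_sub K B G -> sep_part_sub K (adjoin B t) G.
Proof.
move=> hB KB Gt BG z Bt_z [pz [Kpz nz_pz sep_pz pz_z]].
have [hGf _ G_normal] := hG.
have [qt [Kqt nz_qt sep_qt qt_t [rs [G_rs def_qt]]]] := G_normal t Gt.
have [g [_ _ _ g_min reduce]] := adjoin_minpoly hB (galois_over_alg KB Gt).
have [h [Bh size_h def_z]] := reduce z Bt_z.
have nz_lc : lead_coef qt != 0 by rewrite lead_coef_eq0.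
have : g %| \prod_(r <- rs) ('X - r%:P).
  by rewrite -(dvdpZr _ _ nz_lc) -def_qt; apply: g_min => // i; apply: KB.
case/dvdp_prod_XsubC=> m def_g; set S := mask m rs in def_g.
have uniq_rs : uniq rs.
  by rewrite -separable_prod_XsubC -(eqp_separable (eqp_scale _ nz_lc)) -def_qt.
have size_g : size g = (size S).+1 by rewrite (eqp_size def_g) size_prod_XsubC.
have g_S s : s \in S -> root g s by rewrite (eqp_root def_g) root_prod_XsubC.
have pz_hS s : s \in S -> root pz h.[s].
  have Bpzh : poly_over B (pz \Po h).
    apply/(poly_overP hB)/polyOver_comp; apply/(poly_overP hB) => // i; exact: KB.
  have pzh_t : root (pz \Po h) t by rewrite /root horner_comp -def_z.
  by move/g_S/(root_dvdp (g_min _ Bpzh pzh_t)); rewrite /root horner_comp.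
have Ksep_h : poly_over (sep_alg_over K) h.
  apply: (poly_over_interpolation (sep_alg_over_subfield hK) (mask_uniq uniq_rs m)).
  - by move=> s /mem_mask/G_rs/galois_over_sep.
  - by rewrite -ltnS -size_g.
  - by move=> s Ss; exists pz; split; last exact: pz_hS.
rewrite def_z; apply/(subfield_memP hGf)/rpred_horner; last exact/subfield_memP.
by apply/(poly_overP hGf) => i; apply: BG; [apply: Bh | apply: Ksep_h].
Qed.

Variables (M : F -> Prop) (hM : subfield M) (KM : subsetF K M).
Hypothesis MG : sep_part_sub K M G.

Lemma tower_subfield_sep T : (forall t, t \in T -> G t) ->
  subfield (tower M T) /\ sep_part_sub K (tower M T) G.
Proof.
have [M0 _ _ _ _] := hM.
elim: T => [|t T IHT] G_T //=.
have [hT TG] : subfield (tower M T) /\ sep_part_sub K (tower M T) G.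
  by apply: IHT => s Ts; apply: G_T; rewrite inE Ts orbT.
have Gt : G t by apply: G_T; rewrite mem_head.
have KT : subsetF K (tower M T) by move=> k /KM; apply: tower_sub.
by split; [apply: adjoin_subfield (galois_over_alg KT Gt) | apply: sep_part_sub_adjoin].
Qed.

Definition tower_union (z : F) : Prop :=
  exists2 T, (forall t, t \in T -> G t) & tower M T z.

Lemma tower_union2 z1 z2 : tower_union z1 -> tower_union z2 ->
  exists2 T, (forall t, t \in T -> G t) & tower M T z1 /\ tower M T z2.
Proof.
have [M0 _ _ _ _] := hM.
move=> [T1 G_T1 T1z1] [T2 G_T2 T2z2]; exists (T1 ++ T2).
  by move=> t; rewrite mem_cat => /orP[/G_T1|/G_T2].
have [[T2_0 _ _ _ _] _] := tower_subfield_sep G_T2.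
rewrite tower_cat; split; last exact: tower_sub.
by apply: tower_mono T1z1 => z; apply: tower_sub.
Qed.

Lemma tower_union_subfield : subfield tower_union.
Proof.
have [M0 M1 _ _ _] := hM.
split; [by exists [::] | by exists [::] | | |].
- move=> x y /tower_union2/[apply] -[T G_T [Tx Ty]]; exists T => //.
  by have [[_ _ TB _ _] _] := tower_subfield_sep G_T; apply: TB.
- move=> x y /tower_union2/[apply] -[T G_T [Tx Ty]]; exists T => //.
  by have [[_ _ _ TM _] _] := tower_subfield_sep G_T; apply: TM.
- move=> x [T G_T Tx]; exists T => //.
  by have [[_ _ _ _ TV] _] := tower_subfield_sep G_T; apply: TV.
Qed.

Lemma compositum_sep_part_sub : sep_part_sub K (compositum G M) G.
Proof.
move=> z GMz; have [T G_T Tz] : tower_union z.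
  apply: GMz; first exact: tower_union_subfield.
  - move=> t Gt; exists [:: t]; last exact: adjoin_gen.
    by move=> s; rewrite inE => /eqP->.
  - by move=> m Mm; exists [::].
by have [_] := tower_subfield_sep G_T; apply.
Qed.

End GaloisTower.

Lemma sep_closure_galois (F : fieldType) (K : F -> Prop) :
  subfield K -> separably_closed F -> galois_over K (rel_sep_closure K (fun _ => True)).
Proof.
move=> hK sepF; split.
- by apply: (subfield_ext (sep_alg_over_subfield hK)) => z; split=> [|[]].
- by move=> k Kk; split=> //; apply: sep_alg_over_base.
move=> x [_ [p [Kp nz_p sep_p px]]]; exists p; split=> //.
have [rs def_p] := separably_closed_split sepF sep_p; exists rs; split=> // r rs_r.
split=> //; exists p; split=> //.
by rewrite def_p rootZ ?lead_coef_eq0 // root_prod_XsubC.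
Qed.

Lemma compositum_mono (F : fieldType) (A A' B : F -> Prop) :
  subsetF A A' -> subsetF (compositum A B) (compositum A' B).
Proof. by move=> AA' z ABz S hS A'S BS; apply: ABz => // a /AA'/A'S. Qed.

Theorem mainTheorem2 (F : fieldType) (K M : F -> Prop) :
  subfield K -> subfield M -> subsetF K M ->
  (forall x : F, sep_alg_over M x) -> separably_closed F ->
  (forall L1 : F -> Prop,
     subfield L1 -> subsetF M L1 -> finite_over M L1 ->
     (forall x, L1 x -> sep_alg_over M x) ->
     exists L : F -> Prop,
       [/\ subfield L, subsetF K L, subsetF L M,
           finite_over K L /\ (forall x, L x -> sep_alg_over K x) &
           exists Lt : F -> Prop,
             galois_closure K L Lt /\ subsetF L1 (compositum Lt M)]) ->
  galois_closure K (rel_sep_closure K M) (rel_sep_closure K (fun _ => True)).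
Proof.
move=> hK hM KM sepM sepF hyp; split.
- exact: sep_closure_galois.
- by move=> z [].
move=> G hG KaG x [_ sep_x].
have [M0 _ _ _ _] := hM.
have x_alg := sep_alg_over_alg (sepM x).
have [L [_ _ LM [_ sepL] [Lt [[_ _ Lt_min] L1_Lt]]]] :=
  hyp _ (adjoin_subfield hM x_alg) (adjoin_sub x M0) (finite_over_adjoin hM x_alg)
    (fun z _ => sepM z).
have LtG : subsetF Lt G.
  by apply: Lt_min => // l Ll; apply: KaG; split; [apply: LM | apply: sepL].
have MG : sep_part_sub K M G by move=> z Mz sep_z; apply: KaG.
apply: (compositum_sep_part_sub hK hG hM KM MG) sep_x.
exact: compositum_mono LtG _ (L1_Lt x (adjoin_gen hM x)).
Qed.
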